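(* For all $x>0$ and $y>0$, $$\Gamma(x,y)\ \ge\ \exp\big((x+y-2)\,\Gamma'(1)\big).$$
   Context: For $x>0,y>0$ the Bigamma function is the (convergent) improper integral $\Gamma(x,y):=\int_0^1(-\ln t)^{x-1}\big(-\ln(1-t)\big)^{y-1}\,dt$. $\Gamma'(1)$ is the derivative at $1$ of Euler's gamma function $\Gamma(x)=\int_0^\infty t^{x-1}e^{-t}dt$. *)

From Stdlib Require Import Reals.
From Coquelicot Require Import Coquelicot.
Open Scope R_scope.

Definition EulerGamma (x : R) : R :=
  RInt_gen (fun t => Rpower t (x - 1) * exp (- t))
           (at_right 0) (Rbar_locally p_infty).

Definition bigamma_integrand (x y : R) (t : R) : R :=
  Rpower (- ln t) (x - 1) * Rpower (- ln (1 - t)) (y - 1).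

Definition Bigamma (x y : R) : R :=
  RInt_gen (bigamma_integrand x y) (at_right 0) (at_left 1).

From Stdlib Require Import Reals Lra Lia Psatz.
From Coquelicot Require Import Coquelicot.
Open Scope R_scope.

(* Substituting [t = - ln u] writes [Gamma s] as the integral over (0,1) of [(- ln u)^(s-1)];
   differentiating under the integral sign (dominated by the integrable [(-ln u)^(1/2) + (-ln u)^(-1/2)])
   gives [Gamma'(1) = int_0^1 ln (- ln u) du], which by the symmetry [u <-> 1 - u] is also the
   integral of [ln (- ln (1 - u))].  The Bigamma integrand is [exp G] with
   [G u = (x-1) ln (- ln u) + (y-1) ln (- ln (1 - u))], whose integral is [c = (x+y-2) Gamma'(1)],
   so integrating the tangent inequality [exp G >= exp c (1 + G - c)] is Jensen's inequality
   [Bigamma x y >= exp c].  Integrability of the Bigamma integrand comes from the bound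
   [C u^(y/2-1)] near 0 and its mirror image near 1. *)

Lemma exp_le_exp x y : x <= y -> exp x <= exp y.
Proof.
  intro H. destruct (Rle_lt_or_eq_dec _ _ H) as [H'|<-]; [|lra].
  now apply Rlt_le, exp_increasing.
Qed.

Lemma ln_lt_id w : 0 < w -> ln w < w.
Proof. intro H. assert (A := exp_ineq1_le (ln w)). rewrite exp_ln in A by lra. lra. Qed.

Lemma ln_neg_lt1 u : 0 < u < 1 -> ln u < 0.
Proof. intro H. rewrite <- ln_1. apply ln_increasing; lra. Qed.

Lemma mlog_pos u : 0 < u < 1 -> 0 < - ln u.
Proof. intro H. assert (A := ln_neg_lt1 u H). lra. Qed.

Lemma mlog_bounds u : 0 < u < 1 -> 1 - u <= - ln u <= (1 - u) / u.
Proof.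
  intro H. split.
  - assert (A := exp_ineq1_le (ln u)). rewrite exp_ln in A by lra. lra.
  - assert (A := exp_ineq1_le (ln (/ u))).
    rewrite exp_ln, ln_Rinv in A by (try apply Rinv_0_lt_compat; lra).
    replace ((1 - u) / u) with (/ u - 1) by (field; lra). lra.
Qed.

Lemma exp_ge_tangent c z : exp c * (1 + (z - c)) <= exp z.
Proof.
  replace (exp z) with (exp c * exp (z - c)) by (rewrite <- exp_plus; f_equal; ring).
  apply Rmult_le_compat_l; [apply Rlt_le, exp_pos | apply exp_ineq1_le].
Qed.

Lemma exp_taylor1 a : Rabs (exp a - 1 - a) <= a ^ 2 * exp (Rabs a).
Proof.
  assert (A := exp_ineq1_le a). assert (B := exp_ineq1_le (- a)).
  assert (C : exp a * exp (- a) = 1)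
    by (rewrite <- exp_plus; replace (a + - a) with 0 by ring; apply exp_0).
  assert (P := exp_pos a). assert (P' := exp_pos (- a)).
  destruct (Rle_or_lt 0 a) as [H|H].
  - rewrite (Rabs_right a) by lra.
    assert (D : exp a - 1 <= a * exp a) by nra.
    rewrite Rabs_right by lra. nra.
  - rewrite (Rabs_left a) by lra.
    assert (D : 1 >= exp a * (1 - a)) by nra.
    rewrite Rabs_right by lra.
    assert (exp a - 1 - a <= a ^ 2) by nra. nra.
Qed.

Lemma exp_ge_sqr_div4 t : 0 <= t -> t ^ 2 / 4 <= exp t.
Proof.
  intro H. replace (exp t) with (exp (t / 2) * exp (t / 2))
    by (rewrite <- exp_plus; f_equal; field).
  assert (A := exp_ineq1_le (t / 2)). nra.
Qed.

Lemma exp_Rabs_le c : exp (Rabs c) <= exp c + exp (- c).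
Proof.
  assert (exp c > 0) by apply exp_pos. assert (exp (- c) > 0) by apply exp_pos.
  destruct (Rle_or_lt 0 c); [rewrite Rabs_right | rewrite Rabs_left]; lra.
Qed.

Lemma Rpower_taylor1 z h : 0 < z -> Rabs h <= 1/8 ->
  Rabs (Rpower z h - 1 - h * ln z) <= 32 * h ^ 2 * (Rpower z (1/2) + Rpower z (- (1/2))).
Proof.
  intros Hz Hh. unfold Rpower. set (l := ln z).
  assert (Hl := Rabs_pos l). assert (Hh2 : 0 <= h ^ 2) by apply pow2_ge_0.
  (* [exp (|l|/2) = exp (3|l|/8) * exp (|l|/8)]: the first factor absorbs [l^2], the second [exp |h l|] *)
  assert (Hsq : l ^ 2 <= 32 * exp (3 * Rabs l / 8)).
  { assert (A := exp_ge_sqr_div4 (3 * Rabs l / 8) ltac:(lra)).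
    replace (l ^ 2) with (Rabs l ^ 2) by (unfold Rabs; destruct (Rcase_abs l); ring). nra. }
  assert (Hhl : exp (Rabs (h * l)) <= exp (Rabs l / 8)).
  { apply exp_le_exp. rewrite Rabs_mult. nra. }
  assert (Hsplit : exp (3 * Rabs l / 8) * exp (Rabs l / 8) = exp (Rabs (l / 2))).
  { rewrite <- exp_plus. f_equal. unfold Rdiv. rewrite Rabs_mult, (Rabs_right (/ 2)) by lra.
    field. }
  assert (Hsym := exp_Rabs_le (l / 2)).
  replace (1 / 2 * l) with (l / 2) by field. replace (- (1 / 2) * l) with (- (l / 2)) by field.
  eapply Rle_trans; [apply exp_taylor1|].
  replace ((h * l) ^ 2) with (h ^ 2 * l ^ 2) by ring.
  assert (0 < exp (Rabs (h * l))) by apply exp_pos.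
  assert (0 < exp (3 * Rabs l / 8)) by apply exp_pos.
  apply Rle_trans with (32 * h ^ 2 * (exp (3 * Rabs l / 8) * exp (Rabs l / 8))).
  - replace (32 * h ^ 2 * (exp (3 * Rabs l / 8) * exp (Rabs l / 8))) with
      (h ^ 2 * (32 * exp (3 * Rabs l / 8)) * exp (Rabs l / 8)) by ring.
    apply Rmult_le_compat; [apply Rmult_le_pos; [lra | apply pow2_ge_0] | lra | | exact Hhl].
    apply Rmult_le_compat_l; lra.
  - rewrite Hsplit. apply Rmult_le_compat_l; nra.
Qed.

Lemma Rabs_ln_le z : 0 < z -> Rabs (ln z) <= 2 * (Rpower z (1/2) + Rpower z (- (1/2))).
Proof.
  intro Hz. unfold Rpower. set (l := ln z).
  assert (A := exp_ineq1_le (Rabs l / 2)). assert (B := exp_Rabs_le (l / 2)).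
  replace (Rabs (l / 2)) with (Rabs l / 2) in B
    by (unfold Rdiv; rewrite Rabs_mult, (Rabs_right (/ 2)) by lra; auto).
  replace (1 / 2 * l) with (l / 2) by field. replace (- (1 / 2) * l) with (- (l / 2)) by field.
  lra.
Qed.

Lemma Rpower_antitone_exponent v p q : 0 < v < 1 -> p <= q -> Rpower v q <= Rpower v p.
Proof.
  intros Hv Hpq. unfold Rpower. apply exp_le_exp.
  assert (ln v < 0) by (apply ln_neg_lt1; lra). nra.
Qed.

Lemma ex_derive_continuous_R (f : R -> R) x : ex_derive f x -> continuous f x.
Proof. apply (@ex_derive_continuous R_AbsRing R_NormedModule). Qed.

Lemma continuous_Rabs_lt (F : R -> R) c : continuous F c ->
  forall eps, 0 < eps -> exists d, 0 < d /\ forall u, Rabs (u - c) < d -> Rabs (F u - F c) < eps.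
Proof.
  intros H eps Heps. apply filterlim_locally with (eps := mkposreal eps Heps) in H.
  destruct H as [d Hd]. exists d. split; [apply cond_pos|]. intros u Hu. exact (Hd u Hu).
Qed.

(** * Improper integrals over (0,1) *)

Definition is_RInt01 (f : R -> R) (l : R) :=
  forall eps, 0 < eps -> exists d, 0 < d /\
    forall a b, 0 < a < d -> 1 - d < b < 1 ->
      exists y, is_RInt f a b y /\ Rabs (y - l) < eps.

Lemma ball_Rlt (c d : R) (Hd : 0 < d) (y : R) :
  ball c (mkposreal d Hd) y -> c - d < y < c + d.
Proof. intro Hy. change (Rabs (y - c) < d) in Hy. apply Rabs_def2 in Hy. lra. Qed.

Lemma is_RInt01_gen f l : is_RInt01 f l -> is_RInt_gen f (at_right 0) (at_left 1) l.
Proof.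
  intros H P [eps HP].
  destruct (H eps (cond_pos eps)) as [d [Hd H']].
  apply Filter_prod with (Q := fun a => 0 < a < d) (R := fun b => 1 - d < b < 1).
  - exists (mkposreal d Hd). intros y Hy Hy0. apply ball_Rlt in Hy. lra.
  - exists (mkposreal d Hd). intros y Hy Hy0. apply ball_Rlt in Hy. lra.
  - intros a b Ha Hb. destruct (H' a b Ha Hb) as [y [Hy1 Hy2]].
    exists y; split; [exact Hy1 | apply HP; exact Hy2].
Qed.

Lemma Rmin_Rmax_in01 a b x :
  0 < a < 1 -> 0 < b < 1 -> Rmin a b <= x <= Rmax a b -> 0 < x < 1.
Proof.
  intros Ha Hb Hx. split.
  - apply Rlt_le_trans with (Rmin a b); [apply Rmin_glb_lt|]; lra.
  - apply Rle_lt_trans with (Rmax a b); [|apply Rmax_lub_lt]; lra.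
Qed.

Lemma is_RInt01_ext f g l :
  (forall u, 0 < u < 1 -> f u = g u) -> is_RInt01 f l -> is_RInt01 g l.
Proof.
  intros Hfg H eps Heps. destruct (H eps Heps) as [d [Hd H']].
  exists (Rmin d 1). split; [apply Rmin_pos; lra|].
  intros a b Ha Hb.
  assert (Hd1 := Rmin_l d 1). assert (Hd2 := Rmin_r d 1).
  destruct (H' a b) as [y [Hy1 Hy2]]; try lra.
  exists y; split; auto.
  apply is_RInt_ext with f; auto.
  intros x Hx. apply Hfg, (Rmin_Rmax_in01 a b); lra.
Qed.

Lemma is_RInt01_plus f g lf lg :
  is_RInt01 f lf -> is_RInt01 g lg -> is_RInt01 (fun u => f u + g u) (lf + lg).
Proof.
  intros Hf Hg eps Heps.
  destruct (Hf (eps / 2)) as [d1 [Hd1 H1]]; [lra|].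
  destruct (Hg (eps / 2)) as [d2 [Hd2 H2]]; [lra|].
  exists (Rmin d1 d2). split; [apply Rmin_pos; lra|].
  intros a b Ha Hb.
  assert (Hm1 := Rmin_l d1 d2). assert (Hm2 := Rmin_r d1 d2).
  destruct (H1 a b) as [y1 [Hy1 Hz1]]; try lra.
  destruct (H2 a b) as [y2 [Hy2 Hz2]]; try lra.
  exists (y1 + y2). split; [exact (is_RInt_plus f g a b y1 y2 Hy1 Hy2)|].
  replace (y1 + y2 - (lf + lg)) with ((y1 - lf) + (y2 - lg)) by ring.
  eapply Rle_lt_trans; [apply Rabs_triang|]. lra.
Qed.

Lemma is_RInt01_scal k f l : is_RInt01 f l -> is_RInt01 (fun u => k * f u) (k * l).
Proof.
  intros Hf eps Heps.
  assert (Hk := Rabs_pos k).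
  destruct (Hf (eps / (Rabs k + 1))) as [d [Hd H1]].
  { apply Rdiv_lt_0_compat; lra. }
  exists d. split; auto. intros a b Ha Hb.
  destruct (H1 a b Ha Hb) as [y [Hy Hz]].
  exists (k * y). split; [exact (is_RInt_scal f a b k y Hy)|].
  replace (k * y - k * l) with (k * (y - l)) by ring. rewrite Rabs_mult.
  apply Rle_lt_trans with ((Rabs k + 1) * Rabs (y - l)).
  - apply Rmult_le_compat_r; [apply Rabs_pos | lra].
  - replace eps with ((Rabs k + 1) * (eps / (Rabs k + 1))) by (field; lra).
    apply Rmult_lt_compat_l; lra.
Qed.

Lemma is_RInt01_le f g lf lg :
  is_RInt01 f lf -> is_RInt01 g lg -> (forall u, 0 < u < 1 -> f u <= g u) -> lf <= lg.
Proof.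
  intros Hf Hg Hle.
  destruct (Rle_or_lt lf lg) as [H|H]; auto. exfalso.
  set (e := (lf - lg) / 2).
  destruct (Hf e) as [d1 [Hd1 H1]]; [unfold e; lra|].
  destruct (Hg e) as [d2 [Hd2 H2]]; [unfold e; lra|].
  set (a := Rmin (Rmin d1 d2) (1/2) / 2).
  assert (Hm1 := Rmin_l (Rmin d1 d2) (1/2)). assert (Hm2 := Rmin_r (Rmin d1 d2) (1/2)).
  assert (Hm3 := Rmin_l d1 d2). assert (Hm4 := Rmin_r d1 d2).
  assert (Ha : 0 < a).
  { assert (0 < Rmin (Rmin d1 d2) (1/2)) by (repeat apply Rmin_pos; lra). unfold a; lra. }
  assert (Ha2 : a <= Rmin (Rmin d1 d2) (1/2) / 2) by (unfold a; lra).
  destruct (H1 a (1 - a)) as [y1 [Hy1 Hz1]]; try lra.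
  destruct (H2 a (1 - a)) as [y2 [Hy2 Hz2]]; try lra.
  assert (y1 <= y2).
  { apply (is_RInt_le f g a (1 - a) y1 y2); auto; try lra. intros x Hx. apply Hle. lra. }
  apply Rabs_def2 in Hz1. apply Rabs_def2 in Hz2. unfold e in *. lra.
Qed.

Lemma is_RInt01_abs_le f g lf lg :
  is_RInt01 f lf -> is_RInt01 g lg -> (forall u, 0 < u < 1 -> Rabs (f u) <= g u) ->
  Rabs lf <= lg.
Proof.
  intros Hf Hg Hfg. apply Rabs_le. split.
  - replace (- lg) with (-1 * lg) by ring.
    apply (is_RInt01_le (fun u => -1 * g u) f); [now apply is_RInt01_scal | exact Hf|].
    intros u Hu. specialize (Hfg u Hu). apply Rabs_le_between in Hfg. lra.
  - apply (is_RInt01_le f g); auto.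
    intros u Hu. specialize (Hfg u Hu). apply Rabs_le_between in Hfg. lra.
Qed.

Lemma is_RInt01_reflect f l : is_RInt01 f l -> is_RInt01 (fun u => f (1 - u)) l.
Proof.
  intros Hf eps Heps. destruct (Hf eps Heps) as [d [Hd H]].
  exists d. split; auto. intros a b Ha Hb.
  destruct (H (1 - b) (1 - a)) as [y [Hy Hz]]; try lra.
  exists y. split; auto.
  apply is_RInt_swap in Hy.
  assert (Hc := is_RInt_comp_lin f (-1) 1 a b (opp y)).
  replace (-1 * a + 1) with (1 - a) in Hc by ring.
  replace (-1 * b + 1) with (1 - b) in Hc by ring.
  apply is_RInt_opp in Hc; [|exact Hy].
  rewrite <- (opp_opp y).
  apply is_RInt_ext with (2 := Hc). intros x _.
  change (- (-1 * f (-1 * x + 1)) = f (1 - x)).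
  replace (-1 * x + 1) with (1 - x) by ring. ring.
Qed.

Lemma is_RInt01_derive F f la lb :
  (forall u, 0 < u < 1 -> is_derive F u (f u)) ->
  (forall u, 0 < u < 1 -> continuous f u) ->
  (forall eps, 0 < eps -> exists d, 0 < d /\ forall u, 0 < u < d -> Rabs (F u - la) < eps) ->
  (forall eps, 0 < eps -> exists d, 0 < d /\ forall u, 1 - d < u < 1 -> Rabs (F u - lb) < eps) ->
  is_RInt01 f (lb - la).
Proof.
  intros HF Hc H0 H1 eps Heps.
  destruct (H0 (eps / 2)) as [d0 [Hd0 H0']]; [lra|].
  destruct (H1 (eps / 2)) as [d1 [Hd1 H1']]; [lra|].
  exists (Rmin (Rmin d0 d1) 1). split; [repeat apply Rmin_pos; lra|].
  intros a b Ha Hb.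
  assert (Hm1 := Rmin_l (Rmin d0 d1) 1). assert (Hm2 := Rmin_r (Rmin d0 d1) 1).
  assert (Hm3 := Rmin_l d0 d1). assert (Hm4 := Rmin_r d0 d1).
  exists (F b - F a). split.
  - apply (is_RInt_derive F f a b); intros x Hx;
      [apply HF | apply Hc]; apply (Rmin_Rmax_in01 a b); lra.
  - assert (A := H0' a ltac:(lra)). assert (B := H1' b ltac:(lra)).
    replace (F b - F a - (lb - la)) with ((F b - lb) - (F a - la)) by ring.
    eapply Rle_lt_trans; [apply Rabs_triang|]. rewrite Rabs_Ropp. lra.
Qed.

Section ContinuousOn01.

Variable f : R -> R.
Hypothesis f_cont : forall u, 0 < u < 1 -> continuous f u.

Lemma ex_RInt01_in a b : 0 < a < 1 -> 0 < b < 1 -> ex_RInt f a b.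
Proof.
  intros Ha Hb. apply (@ex_RInt_continuous R_CompleteNormedModule).
  intros z Hz. apply f_cont, (Rmin_Rmax_in01 a b); auto.
Qed.

Lemma RInt_Chasles01 a b c :
  0 < a < 1 -> 0 < b < 1 -> 0 < c < 1 -> RInt f a b + RInt f b c = RInt f a c.
Proof. intros Ha Hb Hc. apply (RInt_Chasles f a b c); apply ex_RInt01_in; auto. Qed.

Lemma ex_RInt01_Cauchy :
  (forall eps, 0 < eps -> exists d, 0 < d /\ d <= 1/2 /\
     forall a a' b b', 0 < a < d -> 0 < a' < d -> 1 - d < b < 1 -> 1 - d < b' < 1 ->
       Rabs (RInt f a b - RInt f a' b') < eps) ->
  exists l, is_RInt01 f l.
Proof.
  intros Cau.
  assert (Hinv : forall n, 0 < / (INR n + 3) < 1/2).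
  { intro n. assert (0 <= INR n) by apply pos_INR. split.
    - apply Rinv_0_lt_compat; lra.
    - apply Rle_lt_trans with (/ 3); [apply Rinv_le_contravar|]; lra. }
  assert (Hsmall : forall d, 0 < d -> exists N, forall n, (n >= N)%nat -> / (INR n + 3) < d).
  { intros d Hd. destruct (archimed_cor1 d Hd) as [N [HN1 HN2]]. exists N. intros n Hn.
    apply Rle_lt_trans with (/ INR N); auto.
    assert (0 < INR N) by (apply lt_0_INR; lia).
    assert (INR N <= INR n) by (apply le_INR; lia).
    apply Rinv_le_contravar; lra. }
  set (s := fun n : nat => (RInt f (/ (INR n + 3)) (1 - / (INR n + 3)) : R)).
  assert (Hs : Cauchy_crit s).
  { intros eps Heps. destruct (Cau eps Heps) as [d [Hd [Hd2 H]]].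
    destruct (Hsmall d Hd) as [N HN]. exists N. intros n m Hn Hm. unfold Rdist, s.
    assert (P1 := Hinv n). assert (P2 := Hinv m).
    assert (Q1 := HN n Hn). assert (Q2 := HN m Hm).
    apply H; lra. }
  destruct (Rcomplete.R_complete s Hs) as [l Hl]. exists l.
  intros eps Heps. destruct (Cau (eps / 2)) as [d [Hd [Hd2 H]]]; [lra|].
  exists d. split; auto. intros a b Ha Hb.
  destruct (Hsmall d Hd) as [N1 HN1]. destruct (Hl (eps / 2)) as [N2 HN2]; [lra|].
  set (n := Nat.max N1 N2).
  assert (Q1 := HN1 n ltac:(unfold n; lia)). assert (Q2 := HN2 n ltac:(unfold n; lia)).
  assert (P1 := Hinv n). unfold Rdist in Q2.
  exists (RInt f a b). split.
  - apply (@RInt_correct R_CompleteNormedModule), ex_RInt01_in; lra.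
  - assert (Rabs (RInt f a b - s n) < eps / 2) by (unfold s; apply H; lra).
    replace (RInt f a b - l) with ((RInt f a b - s n) + (s n - l)) by ring.
    eapply Rle_lt_trans; [apply Rabs_triang|]. lra.
Qed.

End ContinuousOn01.

Section Domination.

Variables f g : R -> R.
Hypothesis f_cont : forall u, 0 < u < 1 -> continuous f u.
Hypothesis g_cont : forall u, 0 < u < 1 -> continuous g u.
Hypothesis f_le_g : forall u, 0 < u < 1 -> Rabs (f u) <= g u.

Lemma Rabs_RInt01_le a b :
  0 < a < 1 -> 0 < b < 1 -> Rabs (RInt f a b) <= Rabs (RInt g a b).
Proof.
  assert (K : forall a b, 0 < a < 1 -> 0 < b < 1 -> a <= b ->
                Rabs (RInt f a b) <= Rabs (RInt g a b)).
  { intros a0 b0 Ha Hb Hab.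
    eapply Rle_trans; [|apply Rle_abs].
    apply (norm_RInt_le f g a0 b0 (RInt f a0 b0) (RInt g a0 b0) Hab).
    - intros x Hx. apply f_le_g. lra.
    - apply (@RInt_correct R_CompleteNormedModule), ex_RInt01_in; auto.
    - apply (@RInt_correct R_CompleteNormedModule), ex_RInt01_in; auto. }
  intros Ha Hb. destruct (Rle_or_lt a b) as [H|H]; auto.
  rewrite <- (opp_RInt_swap f b a), <- (opp_RInt_swap g b a) by (apply ex_RInt01_in; auto).
  change (Rabs (- RInt f b a) <= Rabs (- RInt g b a)). rewrite !Rabs_Ropp.
  apply K; auto; lra.
Qed.

Lemma ex_RInt01_dominated lg : is_RInt01 g lg -> exists l, is_RInt01 f l.
Proof.
  intros Hg. apply ex_RInt01_Cauchy; auto.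
  intros eps Heps. destruct (Hg (eps / 4)) as [d [Hd H]]; [lra|].
  set (d' := Rmin d (1/2)).
  assert (Hm1 : d' <= d) by apply Rmin_l. assert (Hm2 : d' <= 1/2) by apply Rmin_r.
  exists d'. split; [apply Rmin_pos; lra|]. split; auto.
  intros a a' b b' Ha Ha' Hb Hb'.
  assert (Hnear : forall x y, 0 < x < d' -> 1 - d' < y < 1 -> Rabs (RInt g x y - lg) < eps / 4).
  { intros x y Hx Hy. destruct (H x y) as [z [Hz1 Hz2]]; try lra.
    rewrite (is_RInt_unique g x y z Hz1). exact Hz2. }
  assert (G1 := Hnear a b ltac:(lra) ltac:(lra)).
  assert (G2 := Hnear a' b ltac:(lra) ltac:(lra)).
  assert (G3 := Hnear a' b' ltac:(lra) ltac:(lra)).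
  apply Rabs_def2 in G1. apply Rabs_def2 in G2. apply Rabs_def2 in G3.
  assert (E1 := RInt_Chasles01 f f_cont a a' b ltac:(lra) ltac:(lra) ltac:(lra)).
  assert (E2 := RInt_Chasles01 f f_cont a' b' b ltac:(lra) ltac:(lra) ltac:(lra)).
  assert (E3 := RInt_Chasles01 g g_cont a a' b ltac:(lra) ltac:(lra) ltac:(lra)).
  assert (E4 := RInt_Chasles01 g g_cont a' b' b ltac:(lra) ltac:(lra) ltac:(lra)).
  assert (B1 := Rabs_RInt01_le a a' ltac:(lra) ltac:(lra)).
  assert (B2 := Rabs_RInt01_le b' b ltac:(lra) ltac:(lra)).
  assert (Rabs (RInt g a a') < eps / 2)
    by (replace (RInt g a a') with (RInt g a b - RInt g a' b) by lra; apply Rabs_def1; lra).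
  assert (Rabs (RInt g b' b) < eps / 2)
    by (replace (RInt g b' b) with (RInt g a' b - RInt g a' b') by lra; apply Rabs_def1; lra).
  replace (RInt f a b - RInt f a' b') with (RInt f a a' + RInt f b' b) by lra.
  eapply Rle_lt_trans; [apply Rabs_triang|]. lra.
Qed.

End Domination.

Lemma is_RInt01_Rpower d : 0 < d -> is_RInt01 (fun u => Rpower u (d - 1)) (1 / d).
Proof.
  intro Hd. replace (1 / d) with (Rpower 1 d / d - 0)
    by (unfold Rpower; rewrite ln_1, Rmult_0_r, exp_0; field; lra).
  apply is_RInt01_derive with (F := fun u => Rpower u d / d).
  - intros u Hu. unfold Rpower. auto_derive; [lra|].
    replace ((d - 1) * ln u) with (d * ln u + - ln u) by ring.
    rewrite exp_plus, exp_Ropp, exp_ln by lra. field. lra.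
  - intros u Hu. apply ex_derive_continuous_R. unfold Rpower. auto_derive. lra.
  - intros eps Heps. assert (Hed : 0 < eps * d) by nra.
    exists (Rpower (eps * d) (/ d)). split; [apply exp_pos|]. intros u Hu.
    assert (Hlt : Rpower u d < eps * d).
    { rewrite <- (Rpower_1 (eps * d)) by lra. replace 1 with (/ d * d) by (field; lra).
      rewrite <- Rpower_mult. apply Rlt_Rpower_l; lra. }
    assert (0 < Rpower u d) by apply exp_pos.
    rewrite Rminus_0_r, Rabs_right by (apply Rle_ge, Rlt_le, Rdiv_lt_0_compat; lra).
    apply Rmult_lt_reg_r with d; [lra|]. unfold Rdiv. rewrite Rmult_assoc, Rinv_l; lra.
  - intros eps Heps.
    assert (C : continuous (fun u => Rpower u d / d) 1).
    { apply ex_derive_continuous_R. unfold Rpower. auto_derive. lra. }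
    destruct (continuous_Rabs_lt _ _ C eps Heps) as [e [He H]].
    exists e. split; auto. intros u Hu. apply H. rewrite Rabs_left; lra.
Qed.

Lemma is_RInt01_const1 : is_RInt01 (fun _ => 1) 1.
Proof.
  assert (H := is_RInt01_Rpower 1 ltac:(lra)). replace (1 / 1) with 1 in H by field.
  apply is_RInt01_ext with (2 := H). intros u Hu.
  replace (1 - 1) with 0 by ring. now apply Rpower_O.
Qed.

Definition loglog (u : R) : R := ln (- ln u).

Lemma bigamma_integrand_exp x y u :
  bigamma_integrand x y u = exp ((x - 1) * loglog u + (y - 1) * loglog (1 - u)).
Proof. unfold bigamma_integrand, Rpower, loglog. now rewrite exp_plus. Qed.

Lemma bigamma_integrand_reflect x y u : bigamma_integrand y x (1 - u) = bigamma_integrand x y u.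
Proof. unfold bigamma_integrand. replace (1 - (1 - u)) with u by ring. ring. Qed.

Lemma bigamma_integrand_cont x y u : 0 < u < 1 -> continuous (bigamma_integrand x y) u.
Proof.
  intro Hu. apply ex_derive_continuous_R. unfold bigamma_integrand, Rpower.
  assert (0 < - ln u) by (apply mlog_pos; lra).
  assert (0 < - ln (1 + - u)) by (apply mlog_pos; lra).
  auto_derive. repeat split; lra.
Qed.

Lemma loglog_ge_near0 u : 0 < u <= 1/2 -> - ln 2 <= loglog u.
Proof.
  intro Hu. assert (B := mlog_bounds u ltac:(lra)). unfold loglog.
  rewrite <- (ln_exp (- ln 2)). apply ln_le; [apply exp_pos|].
  rewrite exp_Ropp, exp_ln; lra.
Qed.

Lemma loglog_near1 u : 0 < u <= 1/2 -> ln u <= loglog (1 - u) <= ln 2 + ln u.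
Proof.
  intro Hu. assert (B := mlog_bounds (1 - u) ltac:(lra)).
  replace (1 - (1 - u)) with u in B by ring. unfold loglog. split.
  - apply ln_le; lra.
  - rewrite <- ln_mult by lra. apply ln_le; [apply mlog_pos; lra|].
    apply Rle_trans with (u / (1 - u)); [lra|].
    apply Rle_trans with (u * 2); [|lra]. apply Rmult_le_compat_l; [lra|].
    replace 2 with (/ (1/2)) by field. apply Rinv_le_contravar; lra.
Qed.

Lemma loglog_lt_mlog e u : 0 < e -> 0 < u < 1 -> loglog u < e * (- ln u) - ln e.
Proof.
  intros He Hu. assert (Hz := mlog_pos u Hu).
  assert (A := ln_lt_id (e * - ln u) ltac:(nra)). rewrite ln_mult in A by lra.
  unfold loglog. lra.
Qed.

Lemma loglog_scal_le_near0 x c : 0 < c -> exists K, forall u, 0 < u <= 1/2 ->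
  (x - 1) * loglog u <= K + c * (- ln u).
Proof.
  intros Hc. destruct (Rle_or_lt x 1) as [Hx1|Hx1].
  - exists ((1 - x) * ln 2). intros u Hu.
    assert (A := loglog_ge_near0 u Hu). assert (B := mlog_pos u ltac:(lra)). nra.
  - (* [loglog u < e (-ln u) - ln e] with the slope [e] tuned so that [(x-1) e = c] *)
    set (e := c / (x - 1)). assert (He : 0 < e) by (apply Rdiv_lt_0_compat; lra).
    exists (- (x - 1) * ln e). intros u Hu.
    assert (A := loglog_lt_mlog e u He ltac:(lra)).
    assert (Ee : (x - 1) * e = c) by (unfold e; field; lra). nra.
Qed.

Lemma bigamma_integrand_near0 x y : 0 < y -> exists K, forall u, 0 < u <= 1/2 ->
  bigamma_integrand x y u <= exp K * Rpower u (y / 2 - 1).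
Proof.
  intros Hy. destruct (loglog_scal_le_near0 x (y / 2) ltac:(lra)) as [K HK].
  exists (K + Rabs (y - 1) * ln 2). intros u Hu.
  rewrite bigamma_integrand_exp. unfold Rpower. rewrite <- exp_plus. apply exp_le_exp.
  assert (A := HK u Hu). destruct (loglog_near1 u Hu) as [B1 B2].
  assert (L2 : 0 < ln 2) by (rewrite <- ln_1; apply ln_increasing; lra).
  destruct (Rle_or_lt 1 y).
  - rewrite Rabs_right by lra.
    assert (0 <= (y - 1) * (ln 2 + ln u - loglog (1 - u))) by (apply Rmult_le_pos; lra). nra.
  - rewrite Rabs_left by lra.
    assert (0 <= (1 - y) * (loglog (1 - u) - ln u)) by (apply Rmult_le_pos; lra). nra.
Qed.

Lemma ex_RInt01_bigamma_integrand x y : 0 < x -> 0 < y ->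
  exists l, is_RInt01 (bigamma_integrand x y) l.
Proof.
  intros Hx Hy.
  destruct (bigamma_integrand_near0 x y Hy) as [K1 H1].
  destruct (bigamma_integrand_near0 y x Hx) as [K2 H2].
  set (d := Rmin x y / 2).
  assert (Hdx : d <= x / 2) by (unfold d; assert (Rmin x y <= x) by apply Rmin_l; lra).
  assert (Hdy : d <= y / 2) by (unfold d; assert (Rmin x y <= y) by apply Rmin_r; lra).
  assert (Hd : 0 < d) by (unfold d; assert (0 < Rmin x y) by (apply Rmin_pos; lra); lra).
  set (W := fun u => exp K1 * Rpower u (d - 1) + exp K2 * Rpower (1 - u) (d - 1)).
  assert (HW : is_RInt01 W (exp K1 * (1 / d) + exp K2 * (1 / d))).
  { apply is_RInt01_plus; apply is_RInt01_scal;
      [|apply (is_RInt01_reflect (fun u => Rpower u (d - 1)))]; now apply is_RInt01_Rpower. }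
  eapply ex_RInt01_dominated with (g := W); [| | |exact HW].
  - intros u Hu. apply bigamma_integrand_cont; auto.
  - intros u Hu. apply ex_derive_continuous_R. unfold W, Rpower. auto_derive. lra.
  - intros u Hu.
    assert (P0 : 0 < bigamma_integrand x y u) by (rewrite bigamma_integrand_exp; apply exp_pos).
    assert (P1 : 0 < exp K1 * Rpower u (d - 1)) by (apply Rmult_lt_0_compat; apply exp_pos).
    assert (P2 : 0 < exp K2 * Rpower (1 - u) (d - 1)) by (apply Rmult_lt_0_compat; apply exp_pos).
    assert (E1 := exp_pos K1). assert (E2 := exp_pos K2).
    rewrite Rabs_right by lra. unfold W. destruct (Rle_or_lt u (1/2)).
    + assert (A := H1 u ltac:(lra)).
      assert (Rpower u (y / 2 - 1) <= Rpower u (d - 1)) by (apply Rpower_antitone_exponent; lra).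
      assert (exp K1 * Rpower u (y / 2 - 1) <= exp K1 * Rpower u (d - 1))
        by (apply Rmult_le_compat_l; lra).
      lra.
    + assert (A := H2 (1 - u) ltac:(lra)). rewrite bigamma_integrand_reflect in A.
      assert (Rpower (1 - u) (x / 2 - 1) <= Rpower (1 - u) (d - 1))
        by (apply Rpower_antitone_exponent; lra).
      assert (exp K2 * Rpower (1 - u) (x / 2 - 1) <= exp K2 * Rpower (1 - u) (d - 1))
        by (apply Rmult_le_compat_l; lra).
      lra.
Qed.

(** * Euler's Gamma function as an integral over (0,1) *)

(* The substitution [t = - ln u] maps [EulerGamma s] to the integral of this function over (0,1). *)
Definition gamma01_integrand (s u : R) : R := Rpower (- ln u) (s - 1).

Lemma gamma01_integrand_cont s u : 0 < u < 1 -> continuous (gamma01_integrand s) u.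
Proof.
  intro Hu. apply ex_derive_continuous_R. unfold gamma01_integrand, Rpower.
  assert (0 < - ln u) by (apply mlog_pos; lra). auto_derive. repeat split; lra.
Qed.

Lemma ex_RInt01_gamma01_integrand s : 0 < s -> exists l, is_RInt01 (gamma01_integrand s) l.
Proof.
  intro Hs. destruct (ex_RInt01_bigamma_integrand s 1 Hs ltac:(lra)) as [l Hl].
  exists l. apply is_RInt01_ext with (2 := Hl). intros u Hu.
  unfold bigamma_integrand, gamma01_integrand. rewrite Rminus_diag, Rpower_O by (apply mlog_pos; lra).
  ring.
Qed.

Lemma is_RInt_gamma_integrand_exp s a b : 0 < a -> 0 < b ->
  is_RInt (fun t => Rpower t (s - 1) * exp (- t)) a b
    (RInt (gamma01_integrand s) (exp (- b)) (exp (- a))).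
Proof.
  intros Ha Hb.
  assert (Hin : forall t, Rmin a b <= t <= Rmax a b -> 0 < exp (- t) < 1).
  { intros t Ht. assert (0 < t) by (apply Rlt_le_trans with (Rmin a b); [apply Rmin_glb_lt|]; lra).
    split; [apply exp_pos|]. rewrite <- exp_0. apply exp_increasing. lra. }
  assert (C : is_RInt (fun t => - exp (- t) * gamma01_integrand s (exp (- t))) a b
                (RInt (gamma01_integrand s) (exp (- a)) (exp (- b)))).
  { apply (is_RInt_comp (gamma01_integrand s) (fun t => exp (- t)) (fun t => - exp (- t))).
    - intros t Ht. apply gamma01_integrand_cont, Hin, Ht.
    - intros t Ht. split; [auto_derive; auto; ring|].
      apply ex_derive_continuous_R. auto_derive. auto. }
  rewrite <- opp_RInt_swap.
  2: { apply ex_RInt01_in; [apply gamma01_integrand_cont|apply Hin..]; split;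
       solve [apply Rmin_l | apply Rmax_l | apply Rmin_r | apply Rmax_r | apply Rmin_Rmax]. }
  apply is_RInt_opp in C. apply is_RInt_ext with (2 := C). intros t _.
  unfold gamma01_integrand. rewrite ln_exp, Ropp_involutive.
  change (- (- exp (- t) * Rpower t (s - 1)) = Rpower t (s - 1) * exp (- t)). ring.
Qed.

Lemma EulerGamma_RInt01 s l : is_RInt01 (gamma01_integrand s) l -> EulerGamma s = l.
Proof.
  intro Hg. unfold EulerGamma. apply is_RInt_gen_unique.
  intros P [eps HP]. destruct (Hg eps (cond_pos eps)) as [d [Hd H]].
  set (d1 := Rmin d (1/2)).
  assert (Hd1 : 0 < d1) by (apply Rmin_pos; lra).
  assert (Hd1' : d1 <= 1/2) by apply Rmin_r. assert (Hd1'' : d1 <= d) by apply Rmin_l.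
  assert (Ha0 : 0 < - ln (1 - d1)) by (apply mlog_pos; lra).
  apply Filter_prod with (Q := fun a => 0 < a < - ln (1 - d1)) (R := fun b => - ln d1 < b).
  - exists (mkposreal _ Ha0). intros a Ha Ha'. apply ball_Rlt in Ha. simpl in Ha. lra.
  - exists (- ln d1). auto.
  - intros a b Ha Hb. assert (Hb0 : 0 < b) by (assert (A := mlog_pos d1); lra).
    assert (EB : 0 < exp (- b) < d).
    { split; [apply exp_pos|]. apply Rlt_le_trans with d1; auto.
      rewrite <- (exp_ln d1) by lra. apply exp_increasing. lra. }
    assert (EA : 1 - d < exp (- a) < 1).
    { split.
      - apply Rle_lt_trans with (1 - d1); [lra|].
        rewrite <- (exp_ln (1 - d1)) by lra. apply exp_increasing. lra.
      - rewrite <- exp_0. apply exp_increasing. lra. }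
    destruct (H (exp (- b)) (exp (- a)) EB EA) as [y [Hy Hz]].
    exists y. split; [|apply HP; exact Hz].
    rewrite <- (is_RInt_unique _ _ _ _ Hy). apply is_RInt_gamma_integrand_exp; lra.
Qed.

Lemma EulerGamma_1 : EulerGamma 1 = 1.
Proof.
  apply EulerGamma_RInt01, is_RInt01_ext with (2 := is_RInt01_const1).
  intros u Hu. unfold gamma01_integrand. rewrite Rminus_diag, Rpower_O; auto.
  apply mlog_pos; lra.
Qed.

(** * The derivative of Gamma at 1 *)

Lemma is_derive_quadratic_remainder (F : R -> R) x L C d : 0 < d ->
  (forall h, Rabs h < d -> Rabs (F (x + h) - F x - h * L) <= C * h ^ 2) ->
  is_derive F x L.
Proof.
  intros Hd HF. apply is_derive_Reals. intros eps Heps.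
  assert (HC := Rabs_pos C).
  assert (Hdel : 0 < Rmin d (eps / (Rabs C + 1))) by (apply Rmin_pos; [|apply Rdiv_lt_0_compat]; lra).
  exists (mkposreal _ Hdel). intros h Hh0 Hh. simpl in Hh.
  assert (Hm1 := Rmin_l d (eps / (Rabs C + 1))). assert (Hm2 := Rmin_r d (eps / (Rabs C + 1))).
  assert (Hha : 0 < Rabs h) by (apply Rabs_pos_lt; auto).
  assert (Hr := HF h ltac:(lra)).
  replace ((F (x + h) - F x) / h - L) with ((F (x + h) - F x - h * L) / h) by (field; auto).
  unfold Rdiv. rewrite Rabs_mult, Rabs_inv.
  apply Rle_lt_trans with (Rabs C * Rabs h).
  - replace (Rabs C * Rabs h) with (Rabs C * h ^ 2 * / Rabs h)
      by (replace (h ^ 2) with (Rabs h * Rabs h) by (unfold Rabs; destruct (Rcase_abs h); ring);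
          field; lra).
    apply Rmult_le_compat_r; [apply Rlt_le, Rinv_0_lt_compat; auto|].
    assert (C <= Rabs C) by apply Rle_abs. assert (0 <= h ^ 2) by apply pow2_ge_0. nra.
  - replace eps with ((Rabs C + 1) * (eps / (Rabs C + 1))) by (field; lra). nra.
Qed.

Lemma ex_RInt01_gamma01_majorant :
  exists lD, is_RInt01 (fun u => gamma01_integrand (3/2) u + gamma01_integrand (1/2) u) lD.
Proof.
  destruct (ex_RInt01_gamma01_integrand (3/2) ltac:(lra)) as [l1 H1].
  destruct (ex_RInt01_gamma01_integrand (1/2) ltac:(lra)) as [l2 H2].
  exists (l1 + l2). now apply is_RInt01_plus.
Qed.

Lemma gamma01_majorant_eq u :
  gamma01_integrand (3/2) u + gamma01_integrand (1/2) u =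
  Rpower (- ln u) (1/2) + Rpower (- ln u) (- (1/2)).
Proof. unfold gamma01_integrand. f_equal; f_equal; field. Qed.

Lemma ex_RInt01_loglog : exists L, is_RInt01 loglog L.
Proof.
  destruct ex_RInt01_gamma01_majorant as [lD HD].
  apply ex_RInt01_dominated with (g := fun u => 2 * (gamma01_integrand (3/2) u + gamma01_integrand (1/2) u))
    (lg := 2 * lD); [| | |now apply is_RInt01_scal].
  - intros u Hu. apply ex_derive_continuous_R. unfold loglog.
    assert (0 < - ln u) by (apply mlog_pos; lra). auto_derive. repeat split; lra.
  - intros u Hu. apply ex_derive_continuous_R. unfold gamma01_integrand, Rpower.
    assert (0 < - ln u) by (apply mlog_pos; lra). auto_derive. repeat split; lra.
  - intros u Hu. rewrite gamma01_majorant_eq. apply Rabs_ln_le, mlog_pos, Hu.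
Qed.

Lemma EulerGamma_remainder1 L : is_RInt01 loglog L ->
  exists C, forall h, Rabs h < 1/8 ->
    Rabs (EulerGamma (1 + h) - EulerGamma 1 - h * L) <= C * h ^ 2.
Proof.
  intros HL. destruct ex_RInt01_gamma01_majorant as [lD HD].
  exists (32 * lD). intros h Hh.
  destruct (ex_RInt01_gamma01_integrand (1 + h)) as [V HV].
  { apply Rabs_def2 in Hh. lra. }
  rewrite (EulerGamma_RInt01 _ _ HV), EulerGamma_1.
  replace (32 * lD * h ^ 2) with (32 * h ^ 2 * lD) by ring.
  replace (V - 1 - h * L) with (V + -1 * 1 + - h * L) by ring.
  apply (is_RInt01_abs_le
           (fun u => gamma01_integrand (1 + h) u + -1 * 1 + - h * loglog u)
           (fun u => 32 * h ^ 2 * (gamma01_integrand (3/2) u + gamma01_integrand (1/2) u))).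
  - apply is_RInt01_plus; [apply is_RInt01_plus|]; auto; apply is_RInt01_scal; auto.
    exact is_RInt01_const1.
  - now apply is_RInt01_scal.
  - intros u Hu. rewrite gamma01_majorant_eq. unfold gamma01_integrand, loglog.
    replace (1 + h - 1) with h by ring.
    replace (Rpower (- ln u) h + -1 * 1 + - h * ln (- ln u))
      with (Rpower (- ln u) h - 1 - h * ln (- ln u)) by ring.
    apply Rpower_taylor1; [apply mlog_pos; auto | lra].
Qed.

Lemma is_derive_EulerGamma_1 L : is_RInt01 loglog L -> is_derive EulerGamma 1 L.
Proof.
  intros HL. destruct (EulerGamma_remainder1 L HL) as [C HC].
  apply (is_derive_quadratic_remainder _ _ _ C (1/8)); [lra | exact HC].
Qed.

Theorem mainTheorem11 :
  forall x y : R, 0 < x -> 0 < y ->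
    ex_derive EulerGamma 1 /\
    ex_RInt_gen (bigamma_integrand x y) (at_right 0) (at_left 1) /\
    exp ((x + y - 2) * Derive EulerGamma 1) <= Bigamma x y.
Proof.
  intros x y Hx Hy.
  destruct ex_RInt01_loglog as [L HL].
  assert (HD := is_derive_EulerGamma_1 L HL).
  destruct (ex_RInt01_bigamma_integrand x y Hx Hy) as [lB HB].
  assert (HB' := is_RInt01_gen _ _ HB).
  split; [exists L; exact HD|]. split; [exists lB; exact HB'|].
  rewrite (is_derive_unique _ _ _ HD). unfold Bigamma. rewrite (is_RInt_gen_unique _ _ HB').
  set (c := (x + y - 2) * L).
  (* integrate the tangent minorant [exp c (1 + (G u - c))] of [exp (G u)],
     where [G u = (x-1) loglog u + (y-1) loglog (1-u)] has integral [c] *)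
  assert (HG := is_RInt01_plus _ _ _ _ (is_RInt01_scal (x - 1) _ _ HL)
                  (is_RInt01_scal (y - 1) _ _ (is_RInt01_reflect _ _ HL))).
  assert (HT := is_RInt01_scal (exp c) _ _
                  (is_RInt01_plus _ _ _ _ is_RInt01_const1
                     (is_RInt01_plus _ _ _ _ HG (is_RInt01_scal (- c) _ _ is_RInt01_const1)))).
  replace (exp c) with (exp c * (1 + ((x - 1) * L + (y - 1) * L + - c * 1)))
    by (unfold c; ring).
  apply (is_RInt01_le _ _ _ _ HT HB). intros u Hu.
  rewrite bigamma_integrand_exp. simpl.
  replace (- c * 1) with (- c) by ring. apply exp_ge_tangent.
Qed.
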